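(* For every $\varepsilon>0$ there exists $C_\varepsilon\in\mathbb R$, depending only on $\varepsilon$ and $p$, such that $$|u|\le\varepsilon\,\Gamma(u)+C_\varepsilon\qquad\text{for all }u\in\bar I_p.$$
   Context: $p\in L^1_{loc}(\mathbb R_+)$ is absolutely continuous and increasing on $(0,\infty)$ (with $p'>0$), and $\lim_{u\to+\infty}p(u)=+\infty$. If $p(0):=\lim_{u\downarrow0}p(u)$ is finite, $p$ is extended to $\mathbb R$ by $p(u)=2p(0)-p(-u)$ for $u\le0$. $I_p=(0,\infty)$ if $p(0)=-\infty$ and $I_p=\mathbb R$ otherwise; $\bar I_p$ is its closure in $\mathbb R$. $\Gamma(u)=\int_1^u(p(a)-p(1))\,da$ for $u\in\bar I_p$. *)

From HB Require Import structures.
From mathcomp Require Import all_boot all_order all_algebra.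
From mathcomp Require Import all_classical all_reals all_analysis.
Set Implicit Arguments. Unset Strict Implicit. Unset Printing Implicit Defensive.
Import Order.TTheory GRing.Theory Num.Theory.
Import numFieldNormedType.Exports.
Local Open Scope classical_set_scope.
Local Open Scope ring_scope.

Section defs.
Variable R : realType.

Definition abs_cont_on (f : R -> R) (a b : R) : Prop :=
  forall e : R, 0 < e -> exists2 d : R, 0 < d &
    forall (n : nat) (x y : nat -> R),
      (forall i, (i < n)%N -> a <= x i /\ x i <= y i /\ y i <= b) ->
      (forall i, (i.+1 < n)%N -> y i <= x i.+1) ->
      \sum_(i < n) (y i - x i) < d ->
      \sum_(i < n) `|f (y i) - f (x i)| < e.

Definition admissible_p (p : R -> R) : Prop :=
  (* p in L^1_loc(R_+), R_+ = [0, +oo) *)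
  (forall b : R, 0 < b -> lebesgue_measure.-integrable `[0, b] (EFin \o p)) /\
  (* p absolutely continuous on (0, +oo) (i.e. on every compact subinterval) *)
  (forall a b : R, 0 < a -> a <= b -> abs_cont_on p a b) /\
  (forall x y : R, 0 < x -> x <= y -> p x <= p y) /\
  {ae lebesgue_measure, forall x : R, 0 < x -> derivable p x 1 /\ 0 < derive1 p x} /\
  (p x @[x --> +oo] --> +oo) /\
  (* if p(0) := lim_{u -> 0+} p u is finite, p(0) is that value and p is
     extended to R by p u = 2 p(0) - p(-u) for u <= 0 *)
  (forall l : R, p x @[x --> 0^'+] --> l ->
     forall u : R, u <= 0 -> p u = 2 * l - p (- u)).

(* closure of I_p *)
Definition Ibar (p : R -> R) : set R :=
  [set u | (p x @[x --> 0^'+] --> -oo) -> 0 <= u].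

(* Gamma(u) = int_1^u (p a - p 1) da  (oriented Lebesgue integral) *)
Definition Gamma (p : R -> R) (u : R) : R :=
  if (1 <= u) then \int[lebesgue_measure]_(a in `[1, u]) (p a - p 1)
  else - \int[lebesgue_measure]_(a in `[u, 1]) (p a - p 1).

End defs.

From HB Require Import structures.
From mathcomp Require Import all_boot all_order all_algebra.
From mathcomp Require Import all_classical all_reals all_analysis.
From mathcomp Require Import lra.
Set Implicit Arguments. Unset Strict Implicit. Unset Printing Implicit Defensive.
Import Order.TTheory GRing.Theory Num.Theory.
Import numFieldNormedType.Exports.
Local Open Scope classical_set_scope.
Local Open Scope ring_scope.

(* On [0, +oo[ the function Gamma is nonnegative, since p is nondecreasing there,
   and its integrand p - p 1 eventually exceeds 1/eps; hence eps * Gamma u grows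
   at least like u - M.  A negative u lies in Ibar p only when p(0+) is finite;
   the odd extension of p about (0, p(0+)) is then nondecreasing on the whole
   line and tends to -oo at -oo, so the same estimate applied to the integrand
   p 1 - p of Gamma u = int_u^1 (p 1 - p) bounds -u. *)

Section lebesgue_itv.
Context {R : realType}.
Local Notation mu := (@lebesgue_measure R).

Lemma nondecreasing_integrable_itv (f : R -> R) (a b : R) :
  nondecreasing_fun f -> mu.-integrable `[a, b] (EFin \o f).
Proof.
move=> f_nd.
have ab_fin : (mu `[a, b] < +oo)%E.
  by rewrite lebesgue_measure_itv /=; case: ifP => _ //; rewrite -EFinD ltry.
apply: measurable_bounded_integrable => //.
  exact: measurable_realfun.nondecreasing_measurable.
exists (`|f a| + `|f b|); split; first exact: num_real.
move=> M bM x; rewrite /= in_itv /= => /andP[ax xb].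
have := f_nd _ _ ax; have := f_nd _ _ xb.
have := ler_norm (f b); have := ler_norm (- f a); rewrite normrN.
have := normr_ge0 (f a); have := normr_ge0 (f b).
rewrite ler_norml; lra.
Qed.

Lemma length_le_Rintegral (h : R -> R) (a b c d eps : R) : 0 < eps ->
  a <= c -> d <= b -> mu.-integrable `[a, b] (EFin \o h) ->
  {in `[a, b], forall x, 0 <= h x} -> {in `[c, d], forall x, eps^-1 <= h x} ->
  d - c <= eps * \int[mu]_(x in `[a, b]) h x.
Proof.
move=> eps_gt0 ac db hI h_ge0 h_ge.
have int_ge0 : 0 <= \int[mu]_(x in `[a, b]) h x.
  by apply: Rintegral_ge0 => x abx; apply: h_ge0; rewrite inE.
have [dc|cd] := ltP d c.
  by apply: le_trans (mulr_ge0 (ltW eps_gt0) int_ge0); rewrite subr_le0 ltW.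
rewrite -[d - c](mulVKf (lt0r_neq0 eps_gt0)) ler_pM2l //.
rewrite /Rintegral -lee_fin fineK; last exact: integrable_fin_num.
have cd_ab : `[c, d] `<=` `[a, b].
  by move=> x /=; rewrite !in_itv /= => /andP[cx xd]; apply/andP; split; lra.
apply: (@le_trans _ _ (\int[mu]_(x in `[c, d]) (h x)%:E)%E); last first.
  by apply: ge0_subset_integral => //; exact: measurable_int hI.
apply: (@le_trans _ _ (\int[mu]_(x in `[c, d]) (cst eps^-1%:E) x)%E).
  have cd_len := lebesgue_measure_itv `[c, d]; rewrite /= lte_fin in cd_len.
  rewrite integral_cst // [X in (_ * X)%E]cd_len.
  case: ltP => [_|dc]; first by rewrite -EFinD -EFinM.
  by rewrite (@le_anti _ _ d c) ?cd ?dc // subrr mulr0 mule0.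
apply: ge0_le_integral => //.
- by move=> x _; rewrite lee_fin invr_ge0 ltW.
- exact: measurable_funS (measurable_int _ hI).
Qed.

End lebesgue_itv.

Lemma cvgry_ge_from {R : realType} (f : R -> R) :
  f x @[x --> +oo] --> +oo ->
  forall A, exists2 M, 1 <= M & forall x, M <= x -> A <= f x.
Proof.
move=> /cvgryPge f_infty A; have [M [_ f_ge]] := f_infty A.
exists (Num.max (M + 1) 1) => [|x]; first by rewrite le_max lexx orbT.
by rewrite ge_max => /andP[Mx _]; apply: f_ge; lra.
Qed.

Section Gamma_nonneg_half_line.
Variables (R : realType) (p : R -> R).
Hypothesis p_nd : forall x y : R, 0 < x -> x <= y -> p x <= p y.
Hypothesis p_int : forall b : R, 0 < b ->
  lebesgue_measure.-integrable `[0, b] (EFin \o p).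

Lemma integrable_Gamma_integrand (a b : R) : 0 <= a ->
  lebesgue_measure.-integrable `[a, b] (EFin \o (fun x => p x - p 1)).
Proof.
move=> a_ge0.
have p_ab : lebesgue_measure.-integrable `[a, b] (EFin \o p).
  have b1_gt0 : 0 < Num.max b 1 by rewrite lt_max ltr01 orbT.
  apply: integrableS (p_int b1_gt0) => //.
  move=> x /=; rewrite !in_itv /= le_max => /andP[ax ->].
  by rewrite (le_trans a_ge0 ax).
have p1_ab : lebesgue_measure.-integrable `[a, b] (EFin \o cst (p 1)).
  exact: nondecreasing_integrable_itv.
exact: integrableB p_ab p1_ab.
Qed.

Lemma Gamma_ge0 (u : R) : 0 <= u -> 0 <= Gamma p u.
Proof.
move=> u_ge0; rewrite /Gamma; case: ifPn => [u_ge1|].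
  apply: Rintegral_ge0 => x /=; rewrite in_itv /= => /andP[x_ge1 _].
  by rewrite subr_ge0 p_nd.
rewrite -ltNge => u_lt1.
have int_ou : lebesgue_measure.-integrable `]u, 1] (EFin \o (fun x => p x - p 1)).
  apply: integrableS (integrable_Gamma_integrand 1 u_ge0) => //.
  by move=> x /=; rewrite !in_itv /= => /andP[/ltW ->].
(* p is only monotone on ]0, +oo[, so the endpoint u = 0 has to be removed *)
rewrite oppr_ge0 -Rintegral_itv_obnd_cbnd //.
apply: (@le_trans _ _ (\int[lebesgue_measure]_(x in `]u, 1]) 0)); last first.
  by rewrite Rintegral_cst // mul0r.
apply: le_Rintegral => //.
- exact: integrable0.
- move=> x /=; rewrite in_itv /= => /andP[ux x_le1].
  by rewrite subr_le0 p_nd //; lra.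
Qed.

Lemma Gamma_ge_right (eps M u : R) : 0 < eps -> 1 <= M ->
  (forall x, M <= x -> p 1 + eps^-1 <= p x) -> 1 <= u ->
  u - M <= eps * Gamma p u.
Proof.
move=> eps_gt0 M_ge1 p_ge u_ge1; rewrite /Gamma u_ge1.
apply: length_le_Rintegral => //.
- exact: integrable_Gamma_integrand.
- move=> x; rewrite in_itv /= => /andP[x_ge1 _].
  by rewrite subr_ge0 p_nd.
- move=> x; rewrite in_itv /= => /andP[Mx _].
  by rewrite lerBrDl p_ge.
Qed.

End Gamma_nonneg_half_line.

Section Gamma_left.
Variables (R : realType) (p : R -> R).
Hypothesis p_nd : nondecreasing_fun p.

Lemma Gamma_ge_left (eps m u : R) : 0 < eps -> m <= 1 ->
  (forall x, x <= m -> p x <= p 1 - eps^-1) -> u < 1 ->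
  m - u <= eps * Gamma p u.
Proof.
move=> eps_gt0 m_le1 p_le u_lt1.
have int_p : lebesgue_measure.-integrable `[u, 1] (EFin \o (fun x => p x - p 1)).
  by apply: nondecreasing_integrable_itv => x y xy; rewrite lerD2r p_nd.
have int_Np : lebesgue_measure.-integrable `[u, 1]
    (EFin \o (fun x => - (p x - p 1))) by exact: integrableN int_p.
have -> : Gamma p u = \int[lebesgue_measure]_(x in `[u, 1]) - (p x - p 1).
  rewrite /Gamma leNgt u_lt1 /= -mulN1r -RintegralZl //.
  by apply: eq_Rintegral => x _; rewrite mulN1r.
apply: length_le_Rintegral => //.
- move=> x; rewrite in_itv /= => /andP[_ x_le1].
  by rewrite oppr_ge0 subr_le0 p_nd.
- move=> x; rewrite in_itv /= => /andP[_ xm].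
  by have := p_le x xm; lra.
Qed.

End Gamma_left.

Section odd_extension_at_0.
Variables (R : realType) (p : R -> R).
Hypothesis p_nd : forall x y : R, 0 < x -> x <= y -> p x <= p y.

Lemma cvg_at_right0_of_not_cvgNy : ~ (p x @[x --> 0^'+] --> -oo) ->
  exists l : R, p x @[x --> 0^'+] --> l.
Proof.
move=> p_not_Ny.
have [m p_ge_m] : exists m, forall x, 0 < x < 1 -> m <= p x.
  apply: contrapT => p_unbounded; apply: p_not_Ny; apply/cvgrNyPlt => A.
  have [x /andP[x_gt0 x_lt1] pxA] : exists2 x, 0 < x < 1 & p x < A.
    apply: contrapT => no_x; apply: p_unbounded; exists A => x x01.
    by rewrite leNgt; apply/negP => pxA; apply: no_x; exists x.
  near=> y; apply: le_lt_trans pxA; apply: p_nd.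
    by near: y; exact: nbhs_right_gt.
  by apply: ltW; near: y; exact: nbhs_right_lt.
exists (inf (p @` `]0, 1[)); apply: nondecreasing_at_right_cvgr.
- by rewrite bnd_simp.
- by move=> x y; rewrite !in_itv /= => /andP[x_gt0 _] _; exact: p_nd.
- by exists m => _ [x x01 <-]; apply: p_ge_m; rewrite /= in_itv in x01.
Unshelve. all: by end_near.
Qed.

Variable l : R.
Hypothesis p_cvg : p x @[x --> 0^'+] --> l.
Hypothesis p_refl : forall u, u <= 0 -> p u = 2 * l - p (- u).

Lemma reflected_nondecreasing : nondecreasing_fun p.
Proof.
have p0 : p 0 = l by have := p_refl (lexx 0); rewrite oppr0; lra.
have p_nd0 z w : 0 <= z -> z <= w -> p z <= p w.
  rewrite le_eqVlt => /predU1P[<-|z_gt0]; last exact: p_nd.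
  rewrite le_eqVlt => /predU1P[<-//|w_gt0]; rewrite p0.
  apply: (cvgr_to_le p_cvg); near=> x; apply: p_nd.
    by near: x; exact: nbhs_right_gt.
  by near: x; exact: nbhs_right_ltW.
move=> x y xy; have [x_ge0|x_lt0] := leP 0 x; first exact: p_nd0.
rewrite (p_refl (ltW x_lt0)); have [y_ge0|y_lt0] := leP 0 y.
  by have := p_nd0 _ _ (lexx 0) y_ge0; have := p_nd0 0 (- x); rewrite p0; lra.
by rewrite (p_refl (ltW y_lt0)) lerD2l lerN2 p_nd0 ?lerN2 // oppr_ge0 ltW.
Unshelve. all: by end_near.
Qed.

Lemma reflected_le_until (A : R) : p x @[x --> +oo] --> +oo ->
  exists2 m, m <= 0 & forall x, x <= m -> p x <= A.
Proof.
move=> p_infty; have [M M_ge1 p_ge] := cvgry_ge_from p_infty (2 * l - A).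
exists (- M) => [|x xM]; first lra.
by rewrite p_refl; [have := p_ge (- x); lra | lra].
Qed.

End odd_extension_at_0.

Theorem lemma3p2 (R : realType) (p : R -> R) (hp : admissible_p p) :
  forall eps : R, 0 < eps -> exists C : R,
    forall u : R, u \in Ibar p -> `|u| <= eps * Gamma p u + C.
Proof.
move=> eps eps_gt0; case: hp => p_int [_ [p_nd [_ [p_infty p_refl]]]].
have [M M_ge1 p_ge] := cvgry_ge_from p_infty (p 1 + eps^-1).
have nonneg_bound u : 0 <= u -> u <= eps * Gamma p u + (M + 1).
  move=> u_ge0; have [u_ge1|u_lt1] := leP 1 u.
    by have := Gamma_ge_right p_nd p_int eps_gt0 M_ge1 p_ge u_ge1; lra.
  by have := mulr_ge0 (ltW eps_gt0) (Gamma_ge0 p_nd p_int u_ge0); lra.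
have [C neg_bound] : exists C, forall u, u \in Ibar p -> u < 0 ->
    - u <= eps * Gamma p u + C.
  have [p_Ny|p_not_Ny] := pselect (p x @[x --> 0^'+] --> -oo).
    by exists 0 => u; rewrite inE => /(_ p_Ny); rewrite leNgt => /negbTE ->.
  have [l p_cvg] := cvg_at_right0_of_not_cvgNy p_nd p_not_Ny.
  have p_refl_l := p_refl l p_cvg.
  have [m m_le0 p_le] := reflected_le_until p_refl_l (p 1 - eps^-1) p_infty.
  exists (- m) => u _ u_lt0.
  have p_nd_R := reflected_nondecreasing p_nd p_cvg p_refl_l.
  have m_le1 := le_trans m_le0 ler01; have u_lt1 := lt_trans u_lt0 ltr01.
  by have := Gamma_ge_left p_nd_R eps_gt0 m_le1 p_le u_lt1; lra.
exists (Num.max (M + 1) C) => u Iu; have [u_lt0|u_ge0] := ltP u 0.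
  rewrite ltr0_norm //; apply: le_trans (neg_bound u Iu u_lt0) _.
  by rewrite lerD2l le_max lexx orbT.
rewrite ger0_norm //; apply: le_trans (nonneg_bound u u_ge0) _.
by rewrite lerD2l le_max lexx.
Qed.
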